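(* Let $\mathbb{F}$ be a field of characteristic $2$ with at least $4$ elements, let $k\geq 1$ be an integer, and let $B\in M_{4k+3}(\mathbb{F})$ be a non-derogative matrix with $\operatorname{Trace}(B)=c$. Then for every $a\in\mathbb{F}$ with $a\neq 0,1$, there exist $N,D\in M_{4k+3}(\mathbb{F})$ with $B=N+D$, $N^2=0$, and $D$ diagonalizable with every eigenvalue in $\{c,\ c+1,\ c+a,\ c+a+1\}$.
   Context: A square matrix is non-derogative if its minimal polynomial equals its characteristic polynomial. A matrix $D\in M_n(\mathbb{F})$ is diagonalizable if there exists an invertible $U\in M_n(\mathbb{F})$ such that $U^{-1}DU$ is diagonal. *)

From HB Require Import structures.
From mathcomp Require Import all_boot all_order all_algebra.
Set Implicit Arguments. Unset Strict Implicit. Unset Printing Implicit Defensive.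
Import GRing.Theory.
Local Open Scope ring_scope.

Definition non_derogative (F : fieldType) (n : nat) (A : 'M[F]_n.+1) : Prop :=
  mxminpoly A = char_poly A.

From HB Require Import structures.
From mathcomp Require Import all_boot all_order all_algebra.
From Stdlib Require Import Classical.
Set Implicit Arguments. Unset Strict Implicit. Unset Printing Implicit Defensive.
Import GRing.Theory.
Local Open Scope ring_scope.

(* A non-derogative matrix B has a cyclic vector v.  In the basis
   v * prod_(j < i) (B - lam_j), with lam_j alternating c + a, c + 1, c + a, ...,
   every basis vector but the last is sent to e_i |-> lam_i e_i + e_(i+1).
   Dropping the ones at positions (i, i+1) with i odd leaves a square-zero N and
   a matrix D whose first 4k+2 rows are killed by (D - c - 1)(D - c - a).  The
   corner entry of D is tr B minus the sum of the lam_j, which in characteristic 2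
   equals c + a + 1, so D - (c + a + 1) maps the last basis vector into the span
   of the others: D is annihilated by a product of three distinct linear factors. *)

(* X takes the prime powers of f that are at least those of g, Y the prime powers
   of g that exceed those of f. *)
Lemma coprimep_lcm_split (F : fieldType) (f g : {poly F}) : f != 0 -> g != 0 ->
  exists X Y, [/\ X %| f, Y %| g, coprimep X Y, f %| X * Y & g %| X * Y].
Proof.
move=> f0 g0; set d := gcdp f g.
set f' := f %/ d; set g' := g %/ d.
have g'0 : g' != 0 by rewrite dvdp_div_eq0 ?dvdp_gcdr.
have fd : f = f' * d by rewrite divpK ?dvdp_gcdl.
have gd : g = g' * d by rewrite divpK ?dvdp_gcdr.
have cfg : coprimep f' g' by apply: coprimep_div_gcd; rewrite f0.
set X := gdcop g' f; set r := gdcop g' g; set Y := g %/ r.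
have Xf : X %| f by apply: dvdp_gdco.
have rg : r %| g by apply: dvdp_gdco.
have cX : coprimep X g' by apply: coprimep_gdco.
have cr : coprimep r g' by apply: coprimep_gdco.
have Xmax e : e %| f -> coprimep e g' -> e %| X by rewrite /X; case: gdcopP => ? _ _; apply.
set s := f %/ X.
have fsX : f = s * X by rewrite divpK.
have gYr : g = Y * r by rewrite divpK.
have X0 : X != 0 by apply: contraNneq f0 => X0; move: Xf; rewrite X0 dvd0p.
have r0 : r != 0 by apply: contraNneq g0 => r0; move: rg; rewrite r0 dvd0p.
have sg' : s %| g' ^+ size f.
  by rewrite -(dvdp_mul2r _ _ X0) -fsX mulrC dvdp_gdcor.
have Yg' : Y %| g' ^+ size g.
  by rewrite -(dvdp_mul2r _ _ r0) -gYr mulrC dvdp_gdcor.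
have rX : r %| X.
  by apply: Xmax => //; rewrite fd dvdp_mull // -(Gauss_dvdpl _ cr) mulrC -gd.
have sY : s %| Y.
  have csf : coprimep s f'.
    by apply: (coprimep_dvdr sg'); rewrite coprimep_expl // coprimep_sym.
  have sd : s %| d by rewrite -(Gauss_dvdpl _ csf) mulrC -fd fsX dvdp_mulr.
  have csr : coprimep s r.
    by apply: (coprimep_dvdr sg'); rewrite coprimep_expl // coprimep_sym.
  by rewrite -(Gauss_dvdpl _ csr) -gYr (dvdp_trans sd) ?dvdp_gcdr.
exists X, Y; split => //.
- by rewrite gYr dvdp_mulr.
- by apply: (coprimep_dvdl Yg'); apply: coprimep_expr.
- by rewrite fsX mulrC dvdp_mul.
- by rewrite gYr mulrC dvdp_mul.
Qed.

Section Annihilator.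
Variables (F : fieldType) (n : nat) (A : 'M[F]_n.+1).
Implicit Types (f g h : {poly F}) (v w : 'rV[F]_n.+1).

Definition annihilates v h := v *m horner_mx A h == 0.

Definition ann_generator v f := f != 0 /\ forall h, annihilates v h = (f %| h).

Definition cyclic_vector v := forall h, annihilates v h -> (size h <= n.+1)%N -> h = 0.

Lemma annihilates_mull v f g : annihilates v f -> annihilates v (g * f).
Proof.
by rewrite /annihilates mulrC rmorphM -mulmxE mulmxA => /eqP->; rewrite mul0mx.
Qed.

Lemma annihilates_dvdp v f g : annihilates v f -> f %| g -> annihilates v g.
Proof. by move=> vf /dvdpP[q ->]; apply: annihilates_mull. Qed.

Lemma annihilatesB v f g : annihilates v f -> annihilates v g -> annihilates v (f - g).
Proof. by rewrite /annihilates rmorphB mulmxBr => /eqP-> /eqP->; rewrite subr0. Qed.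

Lemma annihilates_mulmx v s h :
  annihilates (v *m horner_mx A s) h = annihilates v (s * h).
Proof. by rewrite /annihilates rmorphM -mulmxE mulmxA. Qed.

Lemma ann_generator_exists v : exists f, ann_generator v f.
Proof.
suff gen_below s f : size f = s -> f != 0 -> annihilates v f ->
    exists g, ann_generator v g.
  apply: (gen_below _ (mxminpoly A) erefl); first by rewrite -size_poly_eq0 size_mxminpoly.
  by rewrite /annihilates mx_root_minpoly mulmx0.
elim/ltn_ind: s f => s IH f sf f0 vf; subst s.
have [[r [r0 rf vr]]|no_smaller] :=
  classic (exists r : {poly F}, [/\ r != 0, (size r < size f)%N & annihilates v r]).
  exact: IH _ rf r erefl r0 vr.
exists f; split=> // h; apply/idP/idP => [vh|]; last exact: annihilates_dvdp.
apply/modp_eq0P/eqP; apply: contraT => hf0; exfalso; apply: no_smaller.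
exists (h %% f).
split=> //; first by rewrite ltn_modp.
have -> : h %% f = h - h %/ f * f by rewrite [h in h - _](divp_eq h f) addrAC subrr add0r.
by rewrite annihilatesB // annihilates_mull.
Qed.

Lemma ann_generator_cofactor v f s t :
  ann_generator v f -> f = s * t -> ann_generator (v *m horner_mx A s) t.
Proof.
move=> [f0 vf] fst.
have s0 : s != 0 by apply: contraNneq f0 => s0; rewrite fst s0 mul0r.
have t0 : t != 0 by apply: contraNneq f0 => t0; rewrite fst t0 mulr0.
by split=> // h; rewrite annihilates_mulmx vf fst dvdp_mul2l.
Qed.

Lemma ann_generatorD v w f g : ann_generator v f -> ann_generator w g ->
  coprimep f g -> ann_generator (v + w) (f * g).
Proof.
move=> [f0 vf] [g0 wg] cfg; split=> [|h]; first by rewrite mulf_neq0.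
have annD u u' p : annihilates u p -> annihilates (u + u') p = annihilates u' p.
  by rewrite /annihilates mulmxDl => /eqP->; rewrite add0r.
rewrite Gauss_dvdp //; apply/idP/andP => [vwh|[fh gh]]; last first.
  by rewrite annD ?vf ?wg.
split.
  rewrite -(Gauss_dvdpl h cfg) -vf -(annD w) ?wg ?dvdp_mull // addrC.
  by rewrite mulrC; apply: annihilates_mull.
rewrite coprimep_sym in cfg.
rewrite -(Gauss_dvdpl h cfg) -wg -(annD v) ?vf ?dvdp_mull //.
by rewrite mulrC; apply: annihilates_mull.
Qed.

Lemma ann_lcm v w : exists u, forall h,
  annihilates u h -> annihilates v h /\ annihilates w h.
Proof.
have [f [f0 vf]] := ann_generator_exists v.
have [g [g0 wg]] := ann_generator_exists w.
have [X [Y [Xf Yg cXY fXY gXY]]] := coprimep_lcm_split f0 g0.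
have vX := ann_generator_cofactor (conj f0 vf) (esym (divpK Xf)).
have wY := ann_generator_cofactor (conj g0 wg) (esym (divpK Yg)).
have [_ uXY] := ann_generatorD vX wY cXY.
exists (v *m horner_mx A (f %/ X) + w *m horner_mx A (g %/ Y)) => h.
by rewrite uXY vf wg => XYh; rewrite !(dvdp_trans _ XYh).
Qed.

Lemma ann_lcm_seq (s : seq 'rV[F]_n.+1) :
  exists u, forall h, annihilates u h -> {in s, forall v, annihilates v h}.
Proof.
elim: s => [|v s [u us]]; first by exists 0.
have [u' u'vu] := ann_lcm v u.
exists u' => h /u'vu[vh /us uh] w; rewrite inE => /predU1P[->|] //; exact: uh.
Qed.

Lemma mxminpoly_vector : exists v, forall h, annihilates v h -> mxminpoly A %| h.
Proof.
have [v vP] := ann_lcm_seq [seq delta_mx 0 i | i <- enum 'I_n.+1].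
exists v => h /vP vh; apply: mxminpoly_min; apply/row_matrixP => i.
by rewrite row0 rowE; apply/eqP/vh/map_f; rewrite mem_enum.
Qed.

Lemma non_derogative_cyclic_vector : non_derogative A -> exists v, cyclic_vector v.
Proof.
move=> ndA; have [v vP] := mxminpoly_vector; exists v => h /vP minh sh.
apply: contraTeq minh => h0; apply/negP => /(dvdp_leq h0).
by rewrite ndA size_char_poly ltnNge sh.
Qed.

End Annihilator.

Section NewtonBasis.
Variables (F : fieldType) (n : nat) (A : 'M[F]_n.+1) (v : 'rV[F]_n.+1).
Variable lam : nat -> F.
Hypothesis v_cyclic : cyclic_vector A v.

Local Notation e i := (delta_mx 0 (inord i) : 'rV[F]_n.+1).

Definition newton_poly i : {poly F} := \prod_(j < i) ('X - (lam j)%:P).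

Lemma monic_newton_poly i : newton_poly i \is monic.
Proof. by apply: monic_prod => j _; apply: monicXsubC. Qed.

Lemma newton_polyS i : newton_poly i.+1 = newton_poly i * ('X - (lam i)%:P).
Proof. by rewrite /newton_poly big_ord_recr. Qed.

Lemma size_newton_poly i : size (newton_poly i) = i.+1.
Proof.
elim: i => [|i IH]; first by rewrite /newton_poly big_ord0 size_poly1.
by rewrite newton_polyS size_Mmonic ?monicXsubC ?monic_neq0 ?monic_newton_poly //
  IH size_XsubC addn2.
Qed.

Lemma newton_poly_free j (x : nat -> F) :
  \sum_(i < j) x i *: newton_poly i = 0 -> forall i, (i < j)%N -> x i = 0.
Proof.
elim: j => [//|j IH]; rewrite big_ord_recr /= => sum0.
have xj0 : x j = 0.
  have /(congr1 (coefp j)) := sum0; rewrite linearD linear_sum /= coef0.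
  rewrite big1 ?add0r => [|i _]; last first.
    by rewrite coefZ nth_default ?mulr0 // size_newton_poly.
  have /monicP := monic_newton_poly j; rewrite /lead_coef size_newton_poly /=.
  by rewrite coefZ => ->; rewrite mulr1.
move: sum0; rewrite xj0 scale0r addr0 => /IH xi0 i.
by rewrite ltnS leq_eqVlt => /predU1P[->|/xi0].
Qed.

Definition newton_basis : 'M[F]_n.+1 :=
  \matrix_(i < n.+1) (v *m horner_mx A (newton_poly i)).

Lemma newton_basis_unit : newton_basis \in unitmx.
Proof.
rewrite -row_free_unit -kermx_eq0; apply/eqP/row_matrixP => i.
rewrite row0; set x := row i _; pose y k := x 0 (inord k).
have x0 : x *m newton_basis = 0 by apply/sub_kermxP; apply: row_sub.
have : \sum_(j < n.+1) y j *: newton_poly j = 0.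
  apply: v_cyclic.
    rewrite /annihilates -x0 [x *m _]mulmx_sum_row rmorph_sum mulmx_sumr.
    apply/eqP/eq_bigr => j _; rewrite rowK /y inord_val scalemxAr.
    by congr (_ *m _); apply: horner_mxZ.
  apply: (leq_trans (size_sum _ _ _)); apply/bigmax_leqP => j _.
  by rewrite (leq_trans (size_scale_leq _ _)) // size_newton_poly.
move/newton_poly_free=> y0; apply/rowP => j; rewrite [RHS]mxE.
by have := y0 j (ltn_ord j); rewrite /y inord_val.
Qed.

Lemma newton_basis_coord j : (j <= n)%N ->
  v *m horner_mx A (newton_poly j) *m invmx newton_basis = e j.
Proof.
move=> jn; have -> : v *m horner_mx A (newton_poly j) = row (inord j) newton_basis.
  by rewrite rowK inordK.
by rewrite rowE mulmxK ?newton_basis_unit.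
Qed.

Lemma newton_basis_conj i : (i < n)%N ->
  row (inord i) (conjmx newton_basis A) = e i.+1 + lam i *: e i.
Proof.
move=> ilt; rewrite conjumx ?newton_basis_unit // !row_mul rowK inordK; last exact: ltnW.
set b := fun j => v *m horner_mx A (newton_poly j).
have -> : b i *m A = b i.+1 + lam i *: b i.
  rewrite /b newton_polyS rmorphM rmorphB /= horner_mx_X horner_mx_C -mulmxE.
  by rewrite mulmxA mulmxBr mul_mx_scalar subrK.
by rewrite mulmxDl -scalemxAl !newton_basis_coord // ltnW.
Qed.

End NewtonBasis.

Lemma cyclic_bidiagonal_form (F : fieldType) n (A : 'M[F]_n.+1) v (lam : nat -> F) :
  cyclic_vector A v -> exists2 P, P \in unitmx & forall i, (i < n)%N ->
    row (inord i) (conjmx P A) = delta_mx 0 (inord i.+1) + lam i *: delta_mx 0 (inord i).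
Proof.
move=> v_cyc; exists (newton_basis A v lam).
  exact: newton_basis_unit.
exact: newton_basis_conj.
Qed.

Definition odd_shift_mx (F : fieldType) n : 'M[F]_n :=
  \matrix_(i, j) (odd i && (j == i.+1 :> nat))%:R.

Section OddShift.
Variables (F : fieldType) (n : nat).

Local Notation e i := (delta_mx 0 (inord i) : 'rV[F]_n.+1).
Local Notation N := (odd_shift_mx F n.+1).

Lemma odd_shift_mx_sqr : N *m N = 0.
Proof.
apply/matrixP => i l; rewrite !mxE big1 // => j _; rewrite !mxE.
have [/andP[oi /eqP->]|] := boolP (odd i && (j == i.+1 :> nat)); last by rewrite mul0r.
by rewrite /= oi mulr0.
Qed.

Lemma mxtrace_odd_shift_mx : \tr N = 0.
Proof. by apply: big1 => i _; rewrite mxE eqn_leq ltnn andbF andbF. Qed.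

Lemma row_odd_shift_mx i : (i < n)%N -> row (inord i) N = if odd i then e i.+1 else 0.
Proof.
move=> ilt; apply/rowP => j; rewrite !mxE inordK; last exact: ltnW.
by case: (odd i); rewrite ?mxE //= -(inj_eq val_inj) /= inordK.
Qed.

End OddShift.

Lemma sum_alternating (R : nzRingType) (a b : R) n : ~~ odd n ->
  \sum_(i < n) (if odd i then b else a) = (a + b) *+ n./2.
Proof.
move=> ev; rewrite -(big_mkord xpredT (fun i => if odd i then b else a)).
rewrite -[n in LHS](odd_double_half n) (negPf ev) add0n.
elim: n./2 => [|m IH]; first by rewrite big_geq.
by rewrite doubleS !big_nat_recr //= IH odd_double /= mulrSr addrA.
Qed.

Section AlternatingBidiagonal.
Variables (F : fieldType) (n : nat) (alpha beta : F) (M : 'M[F]_n.+1).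

Local Notation e i := (delta_mx 0 (inord i) : 'rV[F]_n.+1).

Hypothesis n_even : ~~ odd n.
Hypothesis M_rows : forall i, (i < n)%N ->
  row (inord i) M = e i.+1 + (if odd i then beta else alpha) *: e i.
Local Notation D := (M - odd_shift_mx F n.+1).

Lemma row_sub_odd_shift i : (i < n)%N ->
  row (inord i) D = if odd i then beta *: e i else e i.+1 + alpha *: e i.
Proof.
move=> ilt; rewrite linearB /= M_rows // row_odd_shift_mx //.
by case: (odd i); rewrite ?subr0 // addrAC subrr add0r.
Qed.

Lemma sub_odd_shift_corner : D ord_max ord_max = \tr M - (alpha + beta) *+ n./2.
Proof.
have diagD (i : 'I_n) : D (widen_ord (leqnSn n) i) (widen_ord (leqnSn n) i) =
    if odd i then beta else alpha.
  have -> : widen_ord (leqnSn n) i = inord i.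
    by apply: val_inj; rewrite /= inordK // ltnS ltnW.
  have := congr1 (fun r : 'rV[F]_n.+1 => r 0 (inord i)) (row_sub_odd_shift (ltn_ord i)).
  have ei j : (j <= n)%N -> (inord i == inord j :> 'I_n.+1) = (i == j :> nat).
    by move=> jn; rewrite -(inj_eq val_inj) /= !inordK ?ltnS ?(ltnW (ltn_ord i)).
  rewrite mxE => ->; case: (odd i); rewrite !mxE ?ei ?(ltnW (ltn_ord i)) // !eqxx /=.
    by rewrite mulr1.
  by rewrite ltn_eqF // add0r mulr1.
have <- : \tr D = \tr M by rewrite linearB /= mxtrace_odd_shift_mx subr0.
rewrite /mxtrace big_ord_recr /= (eq_bigr _ (fun i _ => diagD i)).
by rewrite sum_alternating // addrAC subrr add0r.
Qed.

Lemma sub_odd_shift_root :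
  horner_mx D (\prod_(x <- [:: D ord_max ord_max; beta; alpha]) ('X - x%:P)) = 0.
Proof.
set gamma := D ord_max ord_max.
have hornerXsubC x : horner_mx D ('X - x%:P) = D - x%:M.
  by rewrite rmorphB /= horner_mx_X horner_mx_C.
have row_XsubC i x : e i *m (D - x%:M) = row (inord i) D - x *: e i.
  by rewrite mulmxBr mul_mx_scalar -rowE.
set q2 := ('X - beta%:P) * ('X - alpha%:P).
have row_q2 i : (i < n)%N -> e i *m horner_mx D q2 = 0.
  move=> ilt; have [oi|ei] := boolP (odd i).
    rewrite rmorphM /= -mulmxE mulmxA !hornerXsubC row_XsubC.
    by rewrite row_sub_odd_shift // oi subrr mul0mx.
  have i1lt : (i.+1 < n)%N.
    by rewrite ltn_neqAle ilt andbT; apply: contraNneq n_even => <- /=.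
  rewrite /q2 mulrC rmorphM /= -mulmxE mulmxA !hornerXsubC row_XsubC.
  rewrite row_sub_odd_shift // (negPf ei) addrK row_XsubC row_sub_odd_shift //=.
  by rewrite ei subrr.
rewrite !big_cons big_nil mulr1 -/q2; apply/row_matrixP => i; rewrite row0 rowE.
have [ilt|ige] := ltnP i n.
  by rewrite mulrC rmorphM /= -mulmxE mulmxA -[i]inord_val row_q2 ?mul0mx.
have -> : i = ord_max by apply: val_inj; apply/eqP; rewrite eqn_leq ige -ltnS ltn_ord.
rewrite rmorphM /= -mulmxE mulmxA hornerXsubC.
have -> : delta_mx 0 ord_max = e n by congr delta_mx; apply: val_inj; rewrite /= inordK.
rewrite row_XsubC mulmx_sum_row; apply: big1 => j _.
have [jlt|jge] := ltnP j n.
  by rewrite rowE -[j]inord_val row_q2 ?scaler0.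
have -> : j = ord_max by apply: val_inj; apply/eqP; rewrite eqn_leq jge -ltnS ltn_ord.
have -> : (inord n : 'I_n.+1) = ord_max by apply: val_inj; rewrite /= inordK.
by rewrite [_ 0 ord_max]mxE [row _ _ _ _]mxE -/gamma !mxE !eqxx mulr1 subrr scale0r.
Qed.

End AlternatingBidiagonal.

Lemma mulrn_pchar2 (R : nzRingType) (x : R) m : 2 \in [pchar R] -> x *+ m = x *+ odd m.
Proof.
move=> ch2; rewrite -[m in LHS](odd_double_half m) mulrnDr -mul2n mulrnA.
by rewrite (mulrn_pchar ch2) mul0rn addr0.
Qed.

Lemma uniq_shifted_roots (F : fieldType) (a c : F) : a != 0 -> a != 1 ->
  uniq [:: c + a + 1; c + 1; c + a].
Proof.
move=> a0 a1; rewrite /= !inE !negb_or -!addrA !(inj_eq (addrI c)) (eq_sym 1 a) a1.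
by rewrite -subr_eq0 addrK a0 -subr_eq0 addrAC subrr add0r oner_eq0.
Qed.

Section SplitAnnihilator.
Variables (F : fieldType) (n : nat) (D : 'M[F]_n.+1) (rs : seq F).
Hypothesis D_root : horner_mx D (\prod_(x <- rs) ('X - x%:P)) = 0.

Lemma diagonalizable_prod_XsubC : uniq rs -> diagonalizable D.
Proof. by move=> urs; apply/diagonalizableP; exists rs => //; apply: mxminpoly_min. Qed.

Lemma eigenvalue_prod_XsubC x : eigenvalue D x -> x \in rs.
Proof.
by rewrite eigenvalue_root_min -root_prod_XsubC => /root_dvdp; apply; apply: mxminpoly_min.
Qed.

End SplitAnnihilator.

Theorem proposition2p13 (F : fieldType) (k : nat)
  (char2 : (2%N \in [pchar F]))
  (card4 : exists s : seq F, uniq s /\ size s = 4%N)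
  (hk : (1 <= k)%N)
  (B : 'M[F]_((4 * k + 2).+1)) (c : F)
  (hB : non_derogative B) (htr : \tr B = c) :
  forall a : F, a != 0 -> a != 1 ->
  exists N D : 'M[F]_((4 * k + 2).+1),
    [/\ B = N + D, N *m N = 0, diagonalizable D &
        forall x : F, eigenvalue D x -> x \in [:: c; c + 1; c + a; c + a + 1]].
Proof.
move=> a a0 a1; set n := (4 * k + 2)%N.
have n_half : n = (2 * k + 1).*2 by rewrite /n -mul2n mulnDr mulnA.
have n_even : ~~ odd n by rewrite n_half odd_double.
have half_odd : odd n./2 by rewrite n_half doubleK addn1 /= mul2n odd_double.
have [v v_cyc] := non_derogative_cyclic_vector hB.
pose lam i := if odd i then c + 1 else c + a.
have [P Pu M_rows] := cyclic_bidiagonal_form lam v_cyc.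
set M := conjmx P B in M_rows.
set N0 := odd_shift_mx F n.+1.
have gammaE : (M - N0) ord_max ord_max = c + a + 1.
  rewrite (sub_odd_shift_corner (alpha := c + a) (beta := c + 1) n_even M_rows).
  rewrite /M conjumx // mxtrace_mulC mulKmx // htr addrACA addrr_pchar2 // add0r.
  by rewrite mulrn_pchar2 // half_odd oppr_pchar2 // addrA.
have D_root : horner_mx (conjmx (invmx P) (M - N0))
    (\prod_(x <- [:: c + a + 1; c + 1; c + a]) ('X - x%:P)) = 0.
  rewrite conjVmx // horner_mx_uconjC // -gammaE.
  by rewrite (sub_odd_shift_root (alpha := c + a) (beta := c + 1) n_even M_rows) mulmx0 mul0mx.
exists (conjmx (invmx P) N0), (conjmx (invmx P) (M - N0)); split.
- by rewrite !conjVmx // -mulmxDl -mulmxDr addrC subrK -conjVmx // conjmxK.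
- by rewrite conjVmx // !mulmxA mulmxK // -(mulmxA _ N0 N0) odd_shift_mx_sqr mulmx0 mul0mx.
- exact: diagonalizable_prod_XsubC D_root (uniq_shifted_roots c a0 a1).
- move=> x /(eigenvalue_prod_XsubC D_root).
  by rewrite !inE => /or3P[]/eqP->; rewrite eqxx !orbT.
Qed.
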